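(* Let $q$ be a prime power and $k\ge3$, $u$, $h\ge1$ integers with $q\ge u\ge 2$. Let $U_1,\dots,U_h$ be $u$-dimensional subspaces of $\mathbf F_q^k$ with $U_i\cap U_j=\{0\}$ for $i\ne j$, and assume $q^k-q^{k-1}>h(q^u-1)$. Let $U$ be the set of nonzero vectors of $\mathbf F_q^k$ not in $U_1\cup\dots\cup U_h$, let $\widetilde G$ be a matrix whose columns consist of exactly one representative of each class $\{\lambda\mathbf v:\lambda\in\mathbf F_q^*\}$, $\mathbf v\in U$, and let $\mathbf C$ be the linear code with generator matrix $\widetilde G$, with parameters $\big[\frac{(q^k-1)-h(q^u-1)}{q-1},k,d=q^{k-1}-hq^{u-1}\big]_q$. If $h\le uq$, then $\mathbf C$ is distance optimal. In particular, if $u=2$ and $h\le 2q$, then $\mathbf C$ is distance optimal.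
   Context: A linear $[n,k,d]_q$ code is distance optimal if no linear $[n,k,d+1]_q$ code exists. *)

From HB Require Import structures.
From mathcomp Require Import all_boot all_order all_algebra.
Set Implicit Arguments. Unset Strict Implicit. Unset Printing Implicit Defensive.
Import GRing.Theory.
Local Open Scope ring_scope.

(* Linear codes over a finite field F are represented by generator matrices:
   the code generated by C : 'M[F]_(m,n) is the row space of C, a word
   x : 'rV_n belongs to it iff (x <= C)%MS, and its dimension is \rank C. *)

Definition wt (F : finFieldType) (n : nat) (x : 'rV[F]_n) : nat :=
  #|[set i : 'I_n | x 0 i != 0]|.

Definition is_min_dist (F : finFieldType) (m n : nat) (C : 'M[F]_(m, n)) (d : nat) : Prop :=
  (exists x : 'rV[F]_n, [/\ (x <= C)%MS, x != 0 & wt x = d]) /\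
  (forall x : 'rV[F]_n, (x <= C)%MS -> x != 0 -> (d <= wt x)%N).

Definition exists_code (F : finFieldType) (n k d : nat) : Prop :=
  exists C : 'M[F]_(k, n), \rank C = k /\ is_min_dist C d.

Definition distance_optimal (F : finFieldType) (m n : nat) (C : 'M[F]_(m, n)) : Prop :=
  forall d : nat, is_min_dist C d -> ~ exists_code F n (\rank C) d.+1.

From mathcomp Require Import all_boot all_order all_algebra.
From mathcomp Require Import zify.

Set Implicit Arguments.
Unset Strict Implicit.
Unset Printing Implicit Defensive.

Import GRing.Theory.

(* A coordinate of a codeword x G vanishes exactly when the corresponding
   column lies in the hyperplane ker x^T.  The columns of G represent, up to
   nonzero scalars, the nonzero vectors outside U_1, ..., U_h, and each U_i has
   at most (q - 1) q^(u-1) vectors off a hyperplane, so every nonzero codeword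
   has weight at least q^(k-1) - h q^(u-1); in particular G has rank k.
   By the Griesmer bound, a k-dimensional code of minimum distance d' has
   length at least \sum_(i < k) ceil(d' / q^i).  For d' = q^(k-1) - h q^(u-1) + 1
   this sum exceeds n = (q^k - 1 - h (q^u - 1)) / (q - 1) as soon as h <= u q. *)

Definition ceil_div (e q : nat) : nat := (e + q.-1) %/ q.

Lemma ceil_div_leq (e q w : nat) : 0 < q -> (ceil_div e q <= w) = (e <= q * w).
Proof. by move=> q_gt0; rewrite /ceil_div -ltnS ltn_divLR //; apply/idP/idP; lia. Qed.

Lemma ceil_div_mulnS (q a : nat) : 0 < q -> ceil_div (q * a).+1 q = a.+1.
Proof.
by move=> q_gt0; rewrite /ceil_div addSn -addnS prednK // -mulnSr mulKn.
Qed.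

(* [griesmer_sum q K e] is \sum_(i < K) ceil(e / q^i), as nested ceilings compose. *)
Fixpoint griesmer_sum (q K e : nat) : nat :=
  if K is K'.+1 then e + griesmer_sum q K' (ceil_div e q) else 0.

Lemma griesmer_sum_monotone (q K : nat) :
  0 < q -> {homo griesmer_sum q K : e1 e2 / e1 <= e2}.
Proof.
move=> q_gt0; elim: K => [//|K IH] e1 e2 le_e /=.
by rewrite leq_add // IH // leq_div2r // leq_add2r.
Qed.

Lemma griesmer_sum_pow_head (q K a j : nat) : 0 < q ->
  (q - 1) * griesmer_sum q (j + K) (q ^ j * a).+1 + q * a =
  q ^ j.+1 * a + (q - 1) * j + (q - 1) * griesmer_sum q K a.+1.
Proof.
move=> q_gt0; elim: j => [|j IH]; first by rewrite add0n expn1 expn0 mul1n muln0 addn0 addnC.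
rewrite addSn /= expnS -mulnA ceil_div_mulnS // mulnDr.
move: IH; rewrite !expnS; case: q q_gt0 => [//|p] _; rewrite subn1 /=; lia.
Qed.

(* Since t < q, every later term ceil(b / q^i) is at least q^(K-i). *)
Lemma griesmer_sum_near_pow (q K b t : nat) : 1 < q -> t < q -> q ^ K <= b + t ->
  q ^ K.+1 <= (q - 1) * (t.+1 + griesmer_sum q K.+1 b).
Proof.
move=> q_gt1; have q_gt0 := ltnW q_gt1.
elim: K b t => [|K IH] b t t_lt_q.
  rewrite expn1 expn0 /= addn0 => bt_ge1.
  have two_le : 2 <= t.+1 + b by lia.
  by apply: leq_trans (leq_mul (leqnn (q - 1)) two_le); lia.
move=> b_ge; have qK_gt0 : 0 < q ^ K by rewrite expn_gt0 q_gt0.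
have b_ge' : q ^ K <= ceil_div b q + 0.
  rewrite addn0 leqNgt -(prednK qK_gt0) ltnS ceil_div_leq // -subn1 mulnBr muln1.
  by have := leq_pmulr q qK_gt0; move: b_ge; rewrite expnS; move: (q ^ K) => X; lia.
have {IH} := IH _ _ q_gt0 b_ge'.
have := leq_mul (leqnn (q - 1)) b_ge.
have -> : griesmer_sum q K.+2 b = b + griesmer_sum q K.+1 (ceil_div b q) by [].
by rewrite (expnS q K.+1); move: (q ^ K.+1) => X; lia.
Qed.

Lemma expn_sub_pred (q k : nat) : 0 < k -> q ^ k - q ^ k.-1 = (q - 1) * q ^ k.-1.
Proof. by case: k => // k _; rewrite expnS mulnBl mul1n. Qed.

Lemma lt_expn_pred_of_count (q k u h : nat) : 1 < q -> 0 < u ->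
  h * (q ^ u - 1) < q ^ k - q ^ k.-1 -> h * q ^ u.-1 < q ^ k.-1.
Proof.
move=> q_gt1; case: u => // v _; case: k => [|k]; first by rewrite subnn.
rewrite expn_sub_pred // => count.
rewrite -(ltn_pmul2l (_ : 0 < q - 1)) ?subn_gt0 //; apply: leq_ltn_trans count.
rewrite mulnCA leq_mul2l expnS mulnBl mul1n leq_sub2l ?orbT //.
by rewrite expn_gt0 (ltnW q_gt1).
Qed.

(* With a = q^(k-u) - h, the first u terms of the Griesmer sum are exactly
   q^(u-1-i) a + 1 (griesmer_sum_pow_head); h <= u q is what keeps the next
   ceiling large enough for griesmer_sum_near_pow. *)
Lemma griesmer_sum_gt_length (q k u h n : nat) :
  1 < q -> 0 < u -> u <= q -> u <= k -> 0 < h -> h <= u * q ->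
  h * q ^ u.-1 < q ^ k.-1 ->
  (q - 1) * n + h * (q ^ u - 1) < q ^ k ->
  n < griesmer_sum q k (q ^ k.-1 - h * q ^ u.-1).+1.
Proof.
move=> q_gt1 u_gt0 u_le_q u_le_k h_gt0 h_le d_gt0 n_lt.
have q_gt0 := ltnW q_gt1.
have [v u_eq] : exists v, u = v.+1 by exists u.-1; rewrite prednK.
have [m k_eq] : exists m, k = v.+1 + m by exists (k - v.+1); rewrite subnKC // -u_eq.
subst u k; have : h < q ^ m.
  by rewrite -(ltn_pmul2r (_ : 0 < q ^ v)) ?expn_gt0 ?q_gt0 // -expnD addnC.
case: m {u_le_k d_gt0} n_lt => [|m] n_lt h_lt.
  by rewrite expn0 ltnNge h_gt0 in h_lt.
set a := q ^ m.+1 - h.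
have pow_eq : q ^ m.+1 = a + h by rewrite subnK // (ltnW h_lt).
have -> : q ^ (v.+1 + m.+1).-1 - h * q ^ v = q ^ v * a.
  by rewrite addSn /= expnD /a mulnBr (mulnC h).
have head := griesmer_sum_pow_head m.+2 a v q_gt0.
set b := ceil_div a.+1 q.
have tail : griesmer_sum q m.+2 a.+1 = a.+1 + griesmer_sum q m.+1 b by [].
have b_ge : q ^ m <= b + v.
  have qb : a.+1 <= q * b by rewrite -ceil_div_leq.
  rewrite -ltnS -(ltn_pmul2l q_gt0) -expnS pow_eq.
  by move: qb h_le; lia.
have near := griesmer_sum_near_pow q_gt1 (u_le_q : v < q) b_ge.
rewrite -(ltn_pmul2l (_ : 0 < q - 1)) ?subn_gt0 //.
rewrite expnD pow_eq mulnBr muln1 in n_lt; rewrite tail in head; rewrite pow_eq in near.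
rewrite addSn -addnS; move: n_lt head near.
move: (q ^ v.+1) (griesmer_sum q m.+1 b) => Y G.
clearbody a b; clear -q_gt1.
by case: q q_gt1 => [//|p] _; rewrite subn1 /=; lia.
Qed.

Local Open Scope ring_scope.

Lemma pigeonhole_fiber (I T : finType) (t0 : T) (S : {set I}) (f : I -> T) :
  exists l, (#|S| <= #|T| * #|[set j in S | f j == l]|)%N.
Proof.
have [l _ l_max] :=
  @arg_maxnP T t0 xpredT (fun l => #|[set j in S | f j == l]|) erefl.
exists l.
have -> : #|S| = (\sum_(l' : T) #|[set j in S | f j == l']|)%N.
  rewrite -sum1_card (partition_big f xpredT) //=.
  by apply: eq_bigr => l' _; rewrite -sum1_card; apply: eq_bigl => j; rewrite inE.
apply: (@leq_trans (\sum_(l' : T) #|[set j in S | f j == l]|)).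
  by apply: leq_sum => l' _; exact: l_max.
by rewrite sum_nat_const.
Qed.

Definition supp_in (F : finFieldType) (n : nat) (T : {set 'I_n}) (x : 'rV[F]_n) :=
  [set j in T | x 0 j != 0].

(* Residual-code step: compare x with x - l c, where l is the most frequent
   ratio x_j / c_j on the support of c. *)
Lemma supp_in_residual (F : finFieldType) (m n : nat) (V : 'M[F]_(m, n))
    (T : {set 'I_n}) (c x : 'rV[F]_n) :
  (c <= V)%MS ->
  (forall y, (y <= V)%MS -> y != 0 -> (#|supp_in T c| <= #|supp_in T y|)%N) ->
  (x <= V :\: c)%MS -> x != 0 ->
  (#|supp_in T c| <= #|F| * #|supp_in (T :\: supp_in T c) x|)%N.
Proof.
move=> cV c_min xW x_neq0; set S := supp_in T c.
have [l le_S] := pigeonhole_fiber 0 S (fun j => x 0 j / c 0 j).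
set A := [set j in S | _ == l] in le_S.
have y_in_V : (x - l *: c <= V)%MS.
  by rewrite addmx_sub ?eqmx_opp ?scalemx_sub // (submx_trans xW (diffmxSl _ _)).
have y_neq0 : x - l *: c != 0.
  apply: contra x_neq0; rewrite subr_eq0 => /eqP x_eq.
  have : (x <= (V :\: c) :&: c)%MS by rewrite sub_capmx xW x_eq scalemx_sub.
  by rewrite capmx_diff submx0.
have supp_y : supp_in T (x - l *: c) \subset supp_in (T :\: S) x :|: (S :\: A).
  apply/subsetP => j; rewrite !inE !mxE => /andP[jT].
  have [c_j0|c_j_neq0] := eqVneq (c 0 j) 0.
    by rewrite c_j0 mulr0 subr0 jT andbF => ->.
  by rewrite jT /= andbT; apply: contraNneq => <-; rewrite mulfVK ?subrr.
have A_sub : A \subset S by apply/subsetP => j; rewrite inE => /andP[].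
have A_le : (#|A| <= #|supp_in (T :\: S) x|)%N.
  have := leq_trans (c_min _ y_in_V y_neq0) (subset_leq_card supp_y).
  have := leq_card_setU (supp_in (T :\: S) x) (S :\: A).
  rewrite cardsD (setIidPr A_sub) -/S => -[le_U _] le_S_U.
  have := subset_leq_card A_sub; move: le_U le_S_U; lia.
by rewrite (leq_trans le_S) // leq_mul2l A_le orbT.
Qed.

Lemma griesmer_bound_on (F : finFieldType) (n K : nat) : forall m (V : 'M[F]_(m, n))
    (T : {set 'I_n}) (e : nat), \rank V = K ->
  (forall x, (x <= V)%MS -> x != 0 -> (e <= #|supp_in T x|)%N) ->
  (griesmer_sum #|F| K e <= #|T|)%N.
Proof.
have q_gt0 : (0 < #|F|)%N by apply/card_gt0P; exists 0.
elim: K => [//|K IH] m V T e rankV e_le /=.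
have nz_row_V : (nz_row V <= V)%MS && (nz_row V != 0).
  by rewrite nz_row_sub nz_row_eq0 -mxrank_eq0 rankV.
have [c /andP[cV c_neq0] c_min] := @arg_minnP _ _
  (fun x => (x <= V)%MS && (x != 0)) (fun x => #|supp_in T x|) nz_row_V.
have S_sub : supp_in T c \subset T by apply/subsetP => j; rewrite inE => /andP[].
have rank_res : \rank (V :\: c)%MS = K.
  have := mxrank_cap_compl V c.
  by rewrite (capmx_idPr cV) rank_rV c_neq0 rankV add1n => -[].
rewrite -(cardsID (supp_in T c) T) (setIidPr S_sub) leq_add ?e_le //.
apply: IH rank_res _ => x xW x_neq0; rewrite ceil_div_leq //.
apply: leq_trans (e_le c cV c_neq0) (supp_in_residual cV _ xW x_neq0).
by move=> y yV y_neq0; apply: c_min; rewrite yV.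
Qed.

Lemma griesmer_bound (F : finFieldType) (m n : nat) (C : 'M[F]_(m, n)) (e : nat) :
  (forall x, (x <= C)%MS -> x != 0 -> (e <= wt x)%N) ->
  (griesmer_sum #|F| (\rank C) e <= n)%N.
Proof.
move=> e_le; have := @griesmer_bound_on F n _ m C setT e erefl.
rewrite cardsT card_ord; apply=> x xC x_neq0.
have -> : supp_in setT x = [set j | x 0 j != 0] by apply/setP => j; rewrite !inE.
exact: e_le.
Qed.

Lemma mx11_eq0 (R : nmodType) (A : 'M[R]_1) : (A == 0) = (A 0 0 == 0).
Proof.
apply/eqP/eqP => [->|A00]; first by rewrite mxE.
by apply/matrixP => i j; rewrite !ord1 A00 mxE.
Qed.

Lemma mulmx_entry_eq0 (F : fieldType) (k n : nat) (x : 'rV[F]_k) (G : 'M[F]_(k, n)) j :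
  ((x *m G) 0 j == 0) = ((col j G)^T <= kermx x^T)%MS.
Proof.
rewrite sub_kermx mx11_eq0 !mxE; congr (_ == 0).
by apply: eq_bigr => a _; rewrite !mxE mulrC.
Qed.

Lemma card_submx (F : finFieldType) (m k : nat) (M : 'M[F]_(m, k)) :
  #|[set v : 'rV[F]_k | (v <= M)%MS]| = (#|F| ^ \rank M)%N.
Proof.
have -> : [set v : 'rV[F]_k | (v <= M)%MS] = [set z *m row_base M | z in [set: 'rV_(\rank M)]].
  apply/setP => v; rewrite inE; apply/idP/imsetP => [|[z _ ->]].
    move=> vM; have /submxP[z ->] : (v <= row_base M)%MS by rewrite eq_row_base.
    by exists z; rewrite ?inE.
  by rewrite -(eq_row_base M) submxMl.
by rewrite card_imset ?cardsT ?card_mx ?mul1n //; apply/row_free_inj/row_base_free.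
Qed.

Lemma card_submx_diff (F : finFieldType) (m1 m2 k : nat)
    (M : 'M[F]_(m1, k)) (K : 'M[F]_(m2, k)) :
  #|[set v : 'rV[F]_k | (v <= M)%MS && ~~ (v <= K)%MS]| =
  (#|F| ^ \rank M - #|F| ^ \rank (M :&: K))%N.
Proof.
have sub : [set v : 'rV[F]_k | (v <= M :&: K)%MS] \subset [set v | (v <= M)%MS].
  by apply/subsetP => v; rewrite !inE sub_capmx => /andP[].
rewrite -!card_submx -(setIidPr sub) -cardsD.
by apply: eq_card => v; rewrite !inE sub_capmx; case: (v <= M)%MS; rewrite /= ?andbT.
Qed.

Lemma card_bigcup_le (I T : finType) (A : I -> {set T}) :
  (#|\bigcup_i A i| <= \sum_i #|A i|)%N.
Proof.
elim/big_rec2: _ => [|i B s _ le_B]; first by rewrite cards0.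
by rewrite (leq_trans (leq_card_setU _ _).1) // leq_add2l.
Qed.

Lemma wt0 (F : finFieldType) (n : nat) : wt (0 : 'rV[F]_n) = 0%N.
Proof. by apply/eqP; rewrite cards_eq0; apply/eqP/setP => j; rewrite !inE mxE eqxx. Qed.

Lemma row_free_wt_gt0 (F : finFieldType) (k n : nat) (G : 'M[F]_(k, n)) :
  (forall x : 'rV[F]_k, x != 0 -> (0 < wt (x *m G))%N) -> row_free G.
Proof.
move=> wt_gt0; rewrite -kermx_eq0; apply/contraT => ker_neq0.
have := wt_gt0 _ (_ : nz_row (kermx G) != 0); rewrite nz_row_eq0.
by rewrite (sub_kermxP (nz_row_sub _)) wt0 => /(_ ker_neq0).
Qed.

Section ComplementOfSubspaces.

Variables (F : finFieldType) (k u h n : nat).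
Variables (Us : 'I_h -> 'M[F]_(u, k)) (G : 'M[F]_(k, n)).
Hypothesis rank_Us : forall i, \rank (Us i) = u.
Hypothesis Us_disjoint : forall i j, i != j -> \rank (Us i :&: Us j)%MS = 0%N.
Hypothesis col_outside : forall j : 'I_n,
  (col j G)^T != 0 /\ forall i, ~~ ((col j G)^T <= Us i)%MS.
Hypothesis col_represents : forall v : 'rV[F]_k,
  v != 0 -> (forall i, ~~ (v <= Us i)%MS) ->
  exists! j : 'I_n, exists lambda : F, lambda != 0 /\ (col j G)^T = lambda *: v.

Local Notation q := #|F|.

Let q_gt1 : (1 < q)%N := card_finNzRing_gt1 F.

Lemma Us_meet_eq0 i j (v : 'rV[F]_k) :
  i != j -> (v <= Us i)%MS -> (v <= Us j)%MS -> v = 0.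
Proof.
move=> neq_ij vi vj; have /eqP cap0 : (Us i :&: Us j)%MS == 0.
  by rewrite -mxrank_eq0 Us_disjoint.
by apply/eqP; rewrite -submx0 -cap0 sub_capmx vi vj.
Qed.

Definition outside_Us : {set 'rV[F]_k} :=
  [set v | (v != 0) && [forall i, ~~ (v <= Us i)%MS]].

Lemma card_outside_Us_lt : (#|outside_Us| + h * (q ^ u - 1) < q ^ k)%N.
Proof.
pose Z i := [set v : 'rV[F]_k | (v <= Us i)%MS && (v != 0)].
have card_Z i : #|Z i| = (q ^ u - 1)%N.
  rewrite -(rank_Us i) -card_submx (cardsD1 0 [set v | (v <= Us i)%MS]) inE sub0mx.
  by rewrite add1n subSS subn0; apply: eq_card => v; rewrite !inE andbC.
have Z_disj i j : i != j -> [disjoint Z i & Z j].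
  move=> neq_ij; rewrite disjoints_subset; apply/subsetP => v.
  rewrite !inE => /andP[vi v_neq0].
  by apply: contra v_neq0 => /andP[vj _]; rewrite (Us_meet_eq0 neq_ij vi vj).
have card_Zs : #|\bigcup_i Z i| = (h * (q ^ u - 1))%N.
  rewrite -sum1_card (partition_disjoint_bigcup _ _ Z_disj).
  rewrite (eq_bigr (fun=> (q ^ u - 1)%N)) => [|i _]; last by rewrite sum1_card card_Z.
  by rewrite sum_nat_const card_ord.
have disj : [disjoint outside_Us & \bigcup_i Z i].
  rewrite disjoints_subset; apply/subsetP => v; rewrite !inE => /andP[_ /forallP v_out].
  by apply/bigcupP => -[i _]; rewrite inE (negbTE (v_out i)).
have sub : outside_Us :|: \bigcup_i Z i \subset [set~ 0].
  apply/subsetP => v; rewrite !inE => /orP[/andP[] // | /bigcupP[i _]].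
  by rewrite inE => /andP[].
have := subset_leq_card sub; rewrite cardsC1 card_mx mul1n.
have [_] := leq_card_setU outside_Us (\bigcup_i Z i); rewrite disj => /eqP ->.
rewrite card_Zs => /leq_ltn_trans; apply.
by rewrite ltn_predL expn_gt0 (ltnW q_gt1).
Qed.

Lemma card_outside_Us_ge : ((q - 1) * n <= #|outside_Us|)%N.
Proof.
pose D := setX [set~ (0 : F)] [set: 'I_n].
pose f (p : F * 'I_n) := p.1 *: (col p.2 G)^T.
have f_inj : {in D &, injective f}.
  move=> [l1 j1] [l2 j2]; rewrite !inE /f /= !andbT => l1_neq0 l2_neq0 f_eq.
  have [c_neq0 c_out] := col_outside j1.
  have [j [_ j_uniq]] := col_represents c_neq0 c_out.
  have j_eq1 : j = j1 by apply: j_uniq; exists 1; rewrite oner_neq0 scale1r.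
  have j_eq2 : j = j2.
    apply: j_uniq; exists (l1 / l2); rewrite mulf_neq0 ?invr_eq0 //.
    by rewrite mulrC -scalerA f_eq scalerA mulVf // scale1r.
  subst j1 j2; move/eqP: f_eq; rewrite -subr_eq0 -scalerBl scaler_eq0 (negbTE c_neq0).
  by rewrite orbF subr_eq0 => /eqP ->.
have fD_sub : f @: D \subset outside_Us.
  apply/subsetP => _ /imsetP[[l j] lD ->]; move: lD; rewrite !inE /f /= andbT => l_neq0.
  have [c_neq0 c_out] := col_outside j.
  rewrite scaler_eq0 negb_or l_neq0 c_neq0; apply/forallP => i.
  by rewrite eqmx_scale.
have := subset_leq_card fD_sub; rewrite card_in_imset // cardsX cardsC1 cardsT card_ord.
by rewrite subn1.
Qed.

Lemma complement_length_bound : ((q - 1) * n + h * (q ^ u - 1) < q ^ k)%N.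
Proof. exact: leq_ltn_trans (leq_add card_outside_Us_ge (leqnn _)) card_outside_Us_lt. Qed.

Lemma card_outside_Us_nker (x : 'rV[F]_k) :
  (#|[set v in outside_Us | ~~ (v <= kermx x^T)%MS]| <= (q - 1) * wt (x *m G))%N.
Proof.
pose D := setX [set~ (0 : F)] [set j | (x *m G) 0 j != 0].
pose f (p : F * 'I_n) := p.1^-1 *: (col p.2 G)^T.
have S_sub : [set v in outside_Us | ~~ (v <= kermx x^T)%MS] \subset f @: D.
  apply/subsetP => v; rewrite !inE => /andP[/andP[v_neq0 /forallP v_out] v_out_K].
  have [j [[l [l_neq0 col_eq]] _]] := col_represents v_neq0 v_out.
  apply/imsetP; exists (l, j); last by rewrite /f /= col_eq scalerA mulVf // scale1r.
  by rewrite !inE l_neq0 mulmx_entry_eq0 col_eq eqmx_scale.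
apply: leq_trans (subset_leq_card S_sub) _; apply: leq_trans (leq_imset_card _ _) _.
by rewrite cardsX cardsC1 subn1.
Qed.

Lemma complement_wt_ge : (0 < k)%N -> (0 < u)%N ->
  forall x : 'rV[F]_k, x != 0 -> (q ^ k.-1 - h * q ^ u.-1 <= wt (x *m G))%N.
Proof.
move=> k_gt0 u_gt0 x x_neq0; set K := kermx x^T.
have rank_K : \rank K = k.-1 by rewrite mxrank_ker mxrank_tr rank_rV x_neq0 subn1.
pose N := [set v : 'rV[F]_k | (v <= 1%:M)%MS && ~~ (v <= K)%MS].
pose B i := [set v : 'rV[F]_k | (v <= Us i)%MS && ~~ (v <= K)%MS].
pose S := [set v in outside_Us | ~~ (v <= K)%MS].
have card_N : #|N| = ((q - 1) * q ^ k.-1)%N.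
  by rewrite card_submx_diff cap1mx mxrank1 rank_K expn_sub_pred.
have card_B i : (#|B i| <= (q - 1) * q ^ u.-1)%N.
  rewrite card_submx_diff rank_Us -expn_sub_pred //.
  apply/leq_sub2l/leq_pexp2l; first exact: ltnW q_gt1.
  have := mxrank_sum_cap (Us i) K; have := rank_leq_col (Us i + K)%MS.
  by rewrite rank_Us rank_K; lia.
have card_Bs : (#|\bigcup_i B i| <= h * ((q - 1) * q ^ u.-1))%N.
  apply: leq_trans (card_bigcup_le B) _.
  apply: (@leq_trans (\sum_(i < h) (q - 1) * q ^ u.-1)%N); first exact: leq_sum.
  by rewrite sum_nat_const card_ord.
have N_sub : N \subset S :|: \bigcup_i B i.
  apply/subsetP => v; rewrite inE submx1 /= => v_out_K; rewrite in_setU.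
  have v_neq0 : v != 0 by apply: contra v_out_K => /eqP ->; rewrite sub0mx.
  have [v_out|/forallPn[i]] := boolP [forall i, ~~ (v <= Us i)%MS].
    by rewrite !inE v_neq0 v_out_K v_out.
  by rewrite negbK => vi; apply/orP; right; apply/bigcupP; exists i; rewrite // inE vi.
have card_S : (#|S| <= (q - 1) * wt (x *m G))%N := card_outside_Us_nker x.
rewrite -(leq_pmul2l (_ : 0 < q - 1)%N) ?subn_gt0 // mulnBr mulnCA.
have le_N : (#|N| <= #|S| + #|\bigcup_i B i|)%N.
  exact: leq_trans (subset_leq_card N_sub) (leq_card_setU _ _).1.
move: card_N card_S card_Bs le_N.
by move: (q ^ k.-1)%N (q ^ u.-1)%N => Y X; lia.
Qed.

End ComplementOfSubspaces.

Theorem corollary2p1 (F : finFieldType) (q k u h n : nat)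
  (hq : #|F| = q) (hk : (3 <= k)%N) (hu2 : (2 <= u)%N) (huq : (u <= q)%N)
  (hh1 : (1 <= h)%N)
  (Us : 'I_h -> 'M[F]_(u, k))
  (hrank : forall i, \rank (Us i) = u)
  (hdisj : forall i j, i != j -> \rank (Us i :&: Us j)%MS = 0%N)
  (hcount : (h * (q ^ u - 1) < q ^ k - q ^ k.-1)%N)
  (G : 'M[F]_(k, n))
  (hcols : forall j : 'I_n,
      (col j G)^T != 0 /\ forall i, ~~ ((col j G)^T <= Us i)%MS)
  (hreps : forall v : 'rV[F]_k,
      v != 0 -> (forall i, ~~ (v <= Us i)%MS) ->
      exists! j : 'I_n, exists lambda : F, lambda != 0 /\ (col j G)^T = lambda *: v)
  (hhu : (h <= u * q)%N) :
  distance_optimal G.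
Proof.
move=> d [[y [y_in_G y_neq0 <-]] _] [C [rank_C [_ C_min]]]; subst q.
have q_gt1 := card_finNzRing_gt1 F.
have u_gt0 : (0 < u)%N := ltnW hu2.
have k_gt0 : (0 < k)%N := ltnW (ltnW hk).
have u_le_k : (u <= k)%N by rewrite -(hrank (Ordinal hh1)) rank_leq_col.
have wt_ge := complement_wt_ge hrank hreps k_gt0 u_gt0.
have d_gt0 := lt_expn_pred_of_count q_gt1 u_gt0 hcount.
have rank_G : \rank G = k.
  by apply/eqP/row_free_wt_gt0 => x /wt_ge; apply: leq_trans; rewrite subn_gt0.
have [z y_eq] := submxP y_in_G.
have z_neq0 : z != 0 by apply: contraNneq y_neq0 => z0; rewrite y_eq z0 mul0mx.
have long := griesmer_sum_gt_length q_gt1 u_gt0 huq u_le_k hh1 hhu d_gt0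
  (complement_length_bound hrank hdisj hcols hreps).
have short := griesmer_bound C_min; rewrite rank_C rank_G in short.
have d_le : ((#|F| ^ k.-1 - h * #|F| ^ u.-1).+1 <= (wt y).+1)%N.
  by rewrite ltnS y_eq wt_ge.
have := leq_trans long (leq_trans (griesmer_sum_monotone k (ltnW q_gt1) d_le) short).
by rewrite ltnn.
Qed.
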